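(* Let $\mathcal{X}$ be a probability distribution over a set of queries, $k \geq 1$, and $\hat q_1,\dots,\hat q_k,\hat c_1,\dots,\hat c_k : \mathcal{X} \to \mathbb{R}$ integrable functions. Let $0 \leq \lambda_1 < \lambda_2$ and let $s^{(1)} \in S_{\lambda_1}$, $s^{(2)} \in S_{\lambda_2}$ be arbitrary. Then $$\mathbb{E}_{x \sim \mathcal{X}}\left[\sum_{i=1}^k s^{(1)}_i(x)\hat c_i(x)\right] \geqslant \mathbb{E}_{x \sim \mathcal{X}}\left[\sum_{i=1}^k s^{(2)}_i(x)\hat c_i(x)\right].$$
   Context: A routing strategy is a measurable function $s : \mathcal{X} \to \mathbb{R}^k$ with $s_i(x) \geq 0$ for all $i$ and $\sum_{i=1}^k s_i(x) = 1$ for all $x$. For $\lambda \in \mathbb{R}^+$, $S_\lambda$ is the set of routing strategies $s$ such that for all $x \in \mathcal{X}$ and $i \in \{1,\dots,k\}$: if $\hat q_i(x) - \lambda \hat c_i(x) < \max_j(\hat q_j(x) - \lambda \hat c_j(x))$ then $s_i(x) = 0$. *)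

From mathcomp Require Import all_boot all_order all_algebra.
From mathcomp Require Import all_classical all_reals all_analysis.
Set Implicit Arguments. Unset Strict Implicit. Unset Printing Implicit Defensive.
Import Order.TTheory GRing.Theory Num.Theory.
Local Open Scope ring_scope.

(* A routing strategy s : X -> R^k, given componentwise (s i x = s_i(x)),
   indices 1..k rendered as 'I_k. *)
Definition routing_strategy {d} {T : measurableType d} {R : realType} {k : nat}
  (s : 'I_k -> T -> R) : Prop :=
  (forall i, measurable_fun setT (s i)) /\
  (forall x i, 0 <= s i x) /\
  (forall x, \sum_(i < k) s i x = 1).

(* max_j (q_j(x) - lam c_j(x)); the index set contains i, so using the
   i-th value as the neutral element of the big max gives exactly the max. *)
Definition score {T} {R : realType} {k : nat} (q c : 'I_k -> T -> R) (lam : R)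
  (j : 'I_k) (x : T) : R := q j x - lam * c j x.

Definition in_S {d} {T : measurableType d} {R : realType} {k : nat}
  (q c : 'I_k -> T -> R) (lam : R) (s : 'I_k -> T -> R) : Prop :=
  routing_strategy s /\
  forall x i,
    score q c lam i x < \big[Num.max/score q c lam i x]_(j < k) score q c lam j x ->
    s i x = 0.

From mathcomp Require Import all_boot all_order all_algebra.
From mathcomp Require Import all_classical all_reals all_analysis.
From mathcomp Require Import lra.
Import Order.TTheory GRing.Theory Num.Theory.
Local Open Scope ring_scope.

(* Any model chosen at trade-off lam1 costs at least as much as any model
   chosen at lam2 > lam1: adding the two optimality inequalities
   q_j - lam1 c_j <= q_i - lam1 c_i and q_i - lam2 c_i <= q_j - lam2 c_j
   gives (lam2 - lam1)(c_j - c_i) <= 0.  Writing both expected costs as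
   double sums over pairs (i, j) weighted by s1_i s2_j, the inequality then
   holds term by term, pointwise in x, and integrates. *)

Lemma le_of_not_lt_bigmax {R : realDomainType} {k : nat} (v : 'I_k -> R) i j :
  ~~ (v i < \big[Num.max/v i]_(l < k) v l) -> v j <= v i.
Proof. by rewrite -leNgt; apply/le_trans/le_bigmax. Qed.

Lemma cost_le_of_optimal {R : realFieldType} (lam1 lam2 qi qj ci cj : R) :
  lam1 < lam2 ->
  qj - lam1 * cj <= qi - lam1 * ci -> qi - lam2 * ci <= qj - lam2 * cj ->
  cj <= ci.
Proof.
move=> lt12 opt1 opt2.
have : (lam2 - lam1) * (cj - ci) <= 0 by nra.
by rewrite pmulr_rle0 ?subr_gt0 // subr_le0.
Qed.

Lemma sum_weights_le {R : numDomainType} {k : nat} (w1 w2 a : 'I_k -> R) :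
  \sum_(i < k) w1 i = 1 -> \sum_(j < k) w2 j = 1 ->
  (forall i, 0 <= w1 i) -> (forall j, 0 <= w2 j) ->
  (forall i j, w1 i != 0 -> w2 j != 0 -> a j <= a i) ->
  \sum_(j < k) w2 j * a j <= \sum_(i < k) w1 i * a i.
Proof.
move=> sum1 sum2 w1_ge0 w2_ge0 le_a.
have -> : \sum_(j < k) w2 j * a j = \sum_i \sum_j w1 i * w2 j * a j.
  rewrite -[LHS]mul1r -sum1 mulr_suml; apply: eq_bigr => i _.
  by rewrite mulr_sumr; apply: eq_bigr => j _; rewrite mulrA.
have -> : \sum_(i < k) w1 i * a i = \sum_i \sum_j w1 i * w2 j * a i.
  by apply: eq_bigr => i _; rewrite -mulr_suml -mulr_sumr sum2 mulr1.
apply: ler_sum => i _; apply: ler_sum => j _.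
have [-> | w1i_neq0] := eqVneq (w1 i) 0; first by rewrite !mul0r.
have [-> | w2j_neq0] := eqVneq (w2 j) 0; first by rewrite mulr0 !mul0r.
by rewrite ler_wpM2l ?mulr_ge0 ?le_a.
Qed.

Section Routing.
Context {d} {T : measurableType d} {R : realType} {k : nat}.
Implicit Types (q c s : 'I_k -> T -> R) (lam : R).

Lemma in_S_score_le {q c lam s} x i j :
  in_S q c lam s -> s i x != 0 -> score q c lam j x <= score q c lam i x.
Proof.
case=> _ opt s_neq0; apply: (le_of_not_lt_bigmax (score q c lam ^~ x)).
by apply: contra s_neq0 => /(opt x i) ->.
Qed.

Lemma in_S_cost_antitone {q c lam1 lam2 s1 s2} x :
  lam1 < lam2 -> in_S q c lam1 s1 -> in_S q c lam2 s2 ->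
  \sum_(i < k) s2 i x * c i x <= \sum_(i < k) s1 i x * c i x.
Proof.
move=> lt12 S1 S2; have [[_ [s1_ge0 sum1]] _] := S1.
have [[_ [s2_ge0 sum2]] _] := S2.
apply: sum_weights_le => // i j s1i_neq0 s2j_neq0.
apply: (cost_le_of_optimal _ _ (q i x) (q j x) _ _ lt12).
- exact: (in_S_score_le x i j S1 s1i_neq0).
- exact: (in_S_score_le x j i S2 s2j_neq0).
Qed.

Lemma routing_strategy_le1 {s} x i : routing_strategy s -> s i x <= 1.
Proof.
case=> _ [s_ge0 sum1]; rewrite -(sum1 x) (bigD1 i) //= lerDl.
exact: sumr_ge0.
Qed.

Lemma routing_cost_integrable {P : probability T R} {c s} :
  (forall i, P.-integrable setT (EFin \o c i)) -> routing_strategy s ->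
  P.-integrable setT (fun x => (\sum_(i < k) s i x * c i x)%:E).
Proof.
move=> c_int rs; have [s_mfun [s_ge0 _]] := rs.
apply: (eq_integrable measurableT
  (fun x => \sum_(i < k) ((EFin \o s i) \* (EFin \o c i)) x)%E).
  by move=> x _; rewrite sumEFin.
apply: (integrable_sum measurableT) => i _.
apply: (integrableMr measurableT) => //.
exists 1; split => // M M_gt1 x _ /=.
by rewrite ger0_norm //; apply/ltW/(le_lt_trans (routing_strategy_le1 x i rs)).
Qed.

End Routing.

Theorem lemma3 (d : measure_display) (T : measurableType d) (R : realType)
  (P : probability T R) (k : nat) (hk : (0 < k)%N)
  (q c : 'I_k -> T -> R)
  (hq : forall i, P.-integrable setT (EFin \o q i))
  (hc : forall i, P.-integrable setT (EFin \o c i))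
  (lam1 lam2 : R) (h1 : 0 <= lam1) (h12 : lam1 < lam2)
  (s1 s2 : 'I_k -> T -> R)
  (hs1 : in_S q c lam1 s1) (hs2 : in_S q c lam2 s2) :
  (\int[P]_x (\sum_(i < k) s2 i x * c i x)%:E
     <= \int[P]_x (\sum_(i < k) s1 i x * c i x)%:E)%E.
Proof.
apply: le_integral => //.
- exact: routing_cost_integrable hc hs2.1.
- exact: routing_cost_integrable hc hs1.1.
- by move=> x _; rewrite lee_fin (in_S_cost_antitone x h12 hs1 hs2).
Qed.
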